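(* Let $F$ be $\mathbb{C}$ or $\mathbb{R}$ and let $\mathfrak{L}$ be a solvable (left) Leibniz algebra over $F$ of dimension $r+1$ whose nilradical is the $r$-dimensional abelian algebra $A(r)$. Let $\{n_1,\dots,n_r,x\}$ be a basis of $\mathfrak{L}$ with $n_1,\dots,n_r$ a basis of $A(r)$ and $x\notin A(r)$, and write $$[x,n_i]=\sum_{j} L_{ij}n_j,\qquad [n_i,x]=\sum_j R_{ij}n_j,\qquad [x,x]=\sum_j\sigma_j n_j,$$ with $L,R\in F^{r\times r}$, $\sigma=(\sigma_1,\dots,\sigma_r)^T\in F^r$. Assume the basis $n_1,\dots,n_r$ is chosen so that $R$ is in Jordan canonical form (block diagonal, each block upper triangular with a single eigenvalue on the diagonal and $1$'s on the superdiagonal). Then: (1) $\sigma$ lies in the null space of $R^T$, i.e. $R^T\sigma=0$; (2) for all $i,j$, if $R_{ij}\neq 0$ then $\sigma_i=0$.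
   Context: A (left) Leibniz algebra is a vector space with bilinear product satisfying $[x,[y,z]]=[[x,y],z]+[y,[x,z]]$. Solvable: derived series $\mathfrak{L}^{(1)}=[\mathfrak{L},\mathfrak{L}]$, $\mathfrak{L}^{(n+1)}=[\mathfrak{L}^{(n)},\mathfrak{L}^{(n)}]$ eventually zero. Nilradical: the unique maximal nilpotent ideal (nilpotent meaning the lower central series $\mathfrak{L}^2=[\mathfrak{L},\mathfrak{L}]$, $\mathfrak{L}^{k+1}=[\mathfrak{L},\mathfrak{L}^k]$ eventually vanishes). $A(r)$ is the $r$-dimensional algebra with all products zero. *)

From HB Require Import structures.
From mathcomp Require Import all_boot all_order all_algebra.
Set Implicit Arguments. Unset Strict Implicit. Unset Printing Implicit Defensive.
Import Order.TTheory GRing.Theory Num.Theory.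
Local Open Scope ring_scope.

Section LeibnizDefs.
Variables (F : fieldType) (L : vectType F) (mul : L -> L -> L).

Definition bilinear_prod : Prop :=
  (forall (a : F) (u v w : L), mul (a *: u + v) w = a *: mul u w + mul v w) /\
  (forall (a : F) (u v w : L), mul w (a *: u + v) = a *: mul w u + mul w v).

Definition left_leibniz : Prop :=
  forall x y z : L, mul x (mul y z) = mul (mul x y) z + mul y (mul x z).

(* [A, B] : the subspace spanned by all products a b, a in A, b in B
   (by bilinearity it suffices to take a, b in bases of A, B). *)
Definition prodsp (A B : {vspace L}) : {vspace L} :=
  <<[seq mul a b | a <- vbasis A, b <- vbasis B]>>%VS.

Fixpoint der (k : nat) : {vspace L} :=
  if k is k'.+1 then prodsp (der k') (der k') else fullv.

Definition solvable_alg : Prop := exists k, der k = 0%VS.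

Definition is_ideal (I : {vspace L}) : Prop :=
  forall a u : L, u \in I -> (mul a u \in I) /\ (mul u a \in I).

Fixpoint lcs (I : {vspace L}) (k : nat) : {vspace L} :=
  if k is k'.+1 then prodsp I (lcs I k') else I.

Definition nilpotent_sp (I : {vspace L}) : Prop := exists k, lcs I k = 0%VS.

Definition is_nilradical (N : {vspace L}) : Prop :=
  [/\ is_ideal N, nilpotent_sp N &
      forall I : {vspace L}, is_ideal I -> nilpotent_sp I -> (I <= N)%VS].

End LeibnizDefs.

(* R is a Jordan matrix: R i i = lam i, R i (i+1) = 1 if i and i+1 lie in the
   same Jordan block (c i = true), 0 otherwise; all other entries 0;
   lam is constant on each block. *)
Definition jordan_form (F : fieldType) (r : nat) (R : 'M[F]_r) : Prop :=
  exists (lam : 'I_r -> F) (c : 'I_r -> bool),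
    (forall i j : 'I_r, j = i.+1 :> nat -> c i -> lam i = lam j) /\
    (forall i j : 'I_r,
        R i j = if i == j then lam i
                else if (j == i.+1 :> nat) && c i then 1 else 0).

(** Taking x = y = z = x in the left Leibniz identity gives [[x,x],x] = 0.
    Expanding [x,x] = sum_j sigma_j n_j and [n_j,x] = sum_k R_jk n_k, the
    coordinates of [[x,x],x] in the free family (n_k) are those of R^T sigma,
    which proves (1).  For a Jordan matrix, row k of R^T sigma = 0 reads
    lam_k sigma_k + sigma_(k-1) = 0 inside a block (without the second term at
    the start of a block), so by induction along each block sigma_k = 0
    whenever lam_k <> 0.  A nonzero R_ij is either a diagonal entry lam_i <> 0,
    or a superdiagonal 1 with lam_i = lam_j: if that eigenvalue is nonzero we
    are done, and if it is zero row j reduces to sigma_i = 0.  This gives (2). *)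

From HB Require Import structures.
From mathcomp Require Import all_boot all_order all_algebra.
From mathcomp Require Import zify.
Set Implicit Arguments.
Unset Strict Implicit.
Unset Printing Implicit Defensive.

Import GRing.Theory Num.Theory.
Local Open Scope ring_scope.

Section LeftLinearProduct.
Variables (F : fieldType) (L : vectType F) (mul : L -> L -> L).
Hypothesis mul_linl : forall a u v w, mul (a *: u + v) w = a *: mul u w + mul v w.

Lemma mul0l w : mul 0 w = 0.
Proof.
have := mul_linl 1 0 0 w; rewrite !scale1r addr0 => dup.
by rewrite -[LHS](addrK (mul 0 w)) -dup subrr.
Qed.

Lemma mul_suml r (a : 'I_r -> F) (v : 'I_r -> L) w :
  mul (\sum_(i < r) a i *: v i) w = \sum_(i < r) a i *: mul (v i) w.
Proof.
elim/big_rec2: _ => [|i u1 u2 _ <-]; first exact: mul0l.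
by rewrite mul_linl.
Qed.

Lemma mul_suml_trmx r (nb : 'I_r -> L) (x : L) (R : 'M[F]_r) (s : 'cV[F]_r) :
    (forall i, mul (nb i) x = \sum_(j < r) R i j *: nb j) ->
  mul (\sum_(j < r) s j 0 *: nb j) x = \sum_(k < r) (R^T *m s) k 0 *: nb k.
Proof.
move=> HR; rewrite mul_suml.
under eq_bigr do rewrite HR scaler_sumr.
rewrite exchange_big /=; apply: eq_bigr => k _.
rewrite mxE scaler_suml; apply: eq_bigr => j _.
by rewrite scalerA !mxE mulrC.
Qed.

End LeftLinearProduct.

Lemma left_leibniz_sqr_mull (F : fieldType) (L : vectType F) (mul : L -> L -> L) x :
  left_leibniz mul -> mul (mul x x) x = 0.
Proof. by move=> Hleib; apply: (addrI (mul x (mul x x))); rewrite addr0 addrC -Hleib. Qed.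

Lemma free_comb_cV_eq0 (F : fieldType) (L : vectType F) r (v : 'I_r -> L)
    (u : 'cV[F]_r) :
  free [seq v i | i <- enum 'I_r] -> \sum_(i < r) u i 0 *: v i = 0 -> u = 0.
Proof.
move=> /(@freeP _ _ r (map_tuple v (ord_tuple r))) Hfree Hu.
apply/matrixP => i z; rewrite (ord1 z) mxE; apply: (Hfree (fun i => u i 0)).
rewrite -[RHS]Hu; apply: eq_bigr => j _.
by rewrite (nth_map j) ?size_enum_ord ?nth_ord_enum.
Qed.

Section JordanKernel.
Variables (F : fieldType) (r : nat) (R : 'M[F]_r) (lam : 'I_r -> F) (c : 'I_r -> bool).
Hypothesis lam_block : forall i j : 'I_r, j = i.+1 :> nat -> c i -> lam i = lam j.
Hypothesis RE : forall i j : 'I_r,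
  R i j = if i == j then lam i else if (j == i.+1 :> nat) && c i then 1 else 0.
Variable s : 'cV[F]_r.

Lemma jordan_trmx_mul_head k : val k = 0%N -> (R^T *m s) k 0 = lam k * s k 0.
Proof.
move=> k0; rewrite !mxE (bigD1 k) //= mxE RE eqxx big1 ?addr0 // => j /negPf jk.
by rewrite mxE RE jk k0 mul0r.
Qed.

Lemma jordan_trmx_mul_next k j : val k = (val j).+1 ->
  (R^T *m s) k 0 = lam k * s k 0 + (if c j then s j 0 else 0).
Proof.
move=> kj; have jk : j != k by apply/eqP => e; move: kj; rewrite e; lia.
rewrite !mxE (bigD1 k) //= (bigD1 j) //= !mxE !RE eqxx (negPf jk) kj eqxx /=.
rewrite big1 ?addr0; first by case: (c j); rewrite ?mul1r ?mul0r.
move=> i /andP[ik ij]; rewrite mxE RE (negPf ik) kj eqSS.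
by rewrite (inj_eq val_inj) eq_sym (negPf ij) mul0r.
Qed.

Hypothesis Rs0 : R^T *m s = 0.

Lemma jordan_kernel_eigen_neq0 k : lam k != 0 -> s k 0 = 0.
Proof.
have row0 l : (R^T *m s) l 0 = 0 by rewrite Rs0 mxE.
have lam_cancel l : lam l != 0 -> lam l * s l 0 = 0 -> s l 0 = 0.
  by move=> ll /eqP; rewrite mulf_eq0 (negPf ll) => /eqP.
elim: {k}(val k) {-2}k (erefl (val k)) => [|n IH] k kn lk; apply: (lam_cancel _ lk).
  by rewrite -jordan_trmx_mul_head.
have nr : (n < r)%N by have := ltn_ord k; rewrite kn; lia.
rewrite -[RHS](row0 k) (@jordan_trmx_mul_next k (Ordinal nr) kn).
case cn: (c _); rewrite ?addr0 // (IH (Ordinal nr)) ?addr0 //.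
by rewrite (@lam_block (Ordinal nr) k kn cn).
Qed.

Lemma jordan_kernel_support i j : R i j != 0 -> s i 0 = 0.
Proof.
have [<- | ij] := eqVneq i j.
  by rewrite RE eqxx; apply: jordan_kernel_eigen_neq0.
rewrite RE (negPf ij); have [ji | _] := eqVneq (val j) i.+1; last by rewrite eqxx.
case ci: (c i); last by rewrite eqxx.
have [li0 _ | /jordan_kernel_eigen_neq0 //] := eqVneq (lam i) 0.
have := jordan_trmx_mul_next ji.
by rewrite Rs0 mxE ci -(@lam_block i j ji ci) li0 mul0r add0r.
Qed.

End JordanKernel.

Theorem lemma4p1 (F : numFieldType) (L : vectType F) (mul : L -> L -> L)
  (r : nat) (nb : 'I_r -> L) (x : L)
  (Hbil : bilinear_prod mul)
  (Hleib : left_leibniz mul)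
  (Hsolv : solvable_alg mul)
  (Hbasis : basis_of fullv (x :: [seq nb i | i <- enum 'I_r]))
  (Hnil : is_nilradical mul <<[seq nb i | i <- enum 'I_r]>>%VS)
  (Habel : forall i j : 'I_r, mul (nb i) (nb j) = 0)
  (Lm Rm : 'M[F]_r) (sigma : 'cV[F]_r)
  (HL : forall i : 'I_r, mul x (nb i) = \sum_(j < r) Lm i j *: nb j)
  (HR : forall i : 'I_r, mul (nb i) x = \sum_(j < r) Rm i j *: nb j)
  (Hs : mul x x = \sum_(j < r) sigma j 0 *: nb j)
  (HJ : jordan_form Rm) :
  Rm^T *m sigma = 0 /\ (forall i j : 'I_r, Rm i j != 0 -> sigma i 0 = 0).
Proof.
have [mul_linl _] := Hbil.
have nb_free : free [seq nb i | i <- enum 'I_r].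
  by have := basis_free Hbasis; rewrite free_cons => /andP[].
have Rsigma0 : Rm^T *m sigma = 0.
  apply: (free_comb_cV_eq0 nb_free).
  by rewrite -(mul_suml_trmx mul_linl _ HR) -Hs left_leibniz_sqr_mull.
have [lam [c [lam_block RE]]] := HJ.
split=> // i j; exact: (jordan_kernel_support lam_block RE Rsigma0).
Qed.
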